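(* In the synchronous $Q$-learning setting of the context, assume $|\mathcal S||\mathcal A|\ge2$ and let $Q^*$ be the unique fixed point of $\mathcal T$. (a) If $\epsilon_k\equiv\epsilon\le\frac{(1-\beta)^2}{640e\log(|\mathcal S||\mathcal A|)}$, then for all $k\ge0$, $\mathbb{E}[\|Q_k-Q^*\|_\infty^2]\le\frac32\|Q_0-Q^*\|_\infty^2\left[1-\frac{(1-\beta)\epsilon}{2}\right]^k+(1+2\|Q^*\|_\infty^2)\frac{256e\log(|\mathcal S||\mathcal A|)\epsilon}{(1-\beta)^2}$. (b) If $\epsilon_k=\epsilon/(k+K)$ with $\epsilon=\frac{4}{1-\beta}$ and $K=\frac{640e\log(|\mathcal S||\mathcal A|)}{(1-\beta)^3}$, then for all $k\ge0$, $\mathbb{E}[\|Q_k-Q^*\|_\infty^2]\le8192e^2(1+2\|Q^*\|_\infty^2+\|Q_0-Q^*\|_\infty^2)\frac{\log(|\mathcal S||\mathcal A|)}{(1-\beta)^3}\frac{1}{k+K}$.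
   Context: Finite MDP: finite state space $\mathcal S$, finite action space $\mathcal A$, transition matrices $P_a(s,s')$, reward $\mathcal R:\mathcal S\times\mathcal A\to[0,1]$, discount $\beta\in(0,1)$. The Bellman optimality operator on $Q\in\mathbb{R}^{|\mathcal S||\mathcal A|}$ is $[\mathcal T(Q)](s,a)=\mathcal R(s,a)+\beta\sum_{s'}P_a(s,s')\max_{a'}Q(s',a')$. Synchronous $Q$-learning: from deterministic $Q_0$, at each iteration $k$ and each $(s,a)$, a successor state $s'_{s,a}\sim P_a(s,\cdot)$ is sampled (independently of the past given the current iterate) and $Q_{k+1}(s,a)=Q_k(s,a)+\epsilon_k(\mathcal R(s,a)+\beta\max_{a'}Q_k(s'_{s,a},a')-Q_k(s,a))$. Logarithms are natural. *)

From mathcomp Require Import all_boot.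
From Stdlib Require Import Reals.
Set Implicit Arguments. Unset Strict Implicit. Unset Printing Implicit Defensive.
Open Scope R_scope.

Section QL.
Variables (S A : finType).

(* max_{a'} Q(s,a') ; A is nonempty in the theorem (|S||A| >= 2). *)
Definition maxA (Q : S -> A -> R) (s : S) : R :=
  match enum A with
  | a :: l => foldl Rmax (Q s a) (map (Q s) l)
  | nil => 0
  end.

Definition supnorm (Q : S -> A -> R) : R :=
  \big[Rmax/0]_(p : S * A) Rabs (Q p.1 p.2).

Definition Qsub (Q1 Q2 : S -> A -> R) : S -> A -> R := fun s a => Q1 s a - Q2 s a.

Definition bellman (P : A -> S -> S -> R) (rew : S -> A -> R) (beta : R)
    (Q : S -> A -> R) : S -> A -> R :=
  fun s a => rew s a + beta * \big[Rplus/0]_(s' : S) (P a s s' * maxA Q s').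

(* probability of a joint sample sigma(s,a) = s'_{s,a}, independent across (s,a) *)
Definition sample_prob (P : A -> S -> S -> R) (sigma : {ffun S * A -> S}) : R :=
  \big[Rmult/1]_(p : S * A) P p.2 p.1 (sigma p).

Definition qstep (rew : S -> A -> R) (beta : R) (eps : nat -> R) (k : nat)
    (Q : S -> A -> R) (sigma : {ffun S * A -> S}) : S -> A -> R :=
  fun s a => Q s a + eps k * (rew s a + beta * maxA Q (sigma (s, a)) - Q s a).

(* Ev ... k0 n f Q = E[ f(Q_{k0+n}) | Q_{k0} = Q ] *)
Fixpoint Ev (P : A -> S -> S -> R) (rew : S -> A -> R) (beta : R) (eps : nat -> R)
    (k0 n : nat) (f : (S -> A -> R) -> R) (Q : S -> A -> R) {struct n} : R :=
  match n with
  | O => f Q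
  | n'.+1 => \big[Rplus/0]_(sigma : {ffun S * A -> S})
              (sample_prob P sigma * Ev P rew beta eps k0.+1 n' f (qstep rew beta eps k0 Q sigma))
  end.

End QL.

(* The error [e_k = Q_k - Q*] satisfies [e_(k+1) = (1 - eps_k) e_k + eps_k D_k + eps_k W_k]
   with [|D_k| <= beta ||e_k||] and a centred, bounded noise [W_k].  The Lyapunov function
   [ln (sum_p 2 cosh (lam e(p))) / lam] is within [ln (2 |S||A|) / lam] of [||e||]; the
   sub-Gaussian bound on [W_k], Hoelder's inequality and Jensen's inequality bound
   its expectation, for a suitably growing [lam_k], by any sequence [v_k] with
   [v_(k+1) >= (1 - eps_k (1 - beta)) v_k + O(lam_k eps_k^2 + eps_k ln |S||A| / lam_k)].
   Jensen's inequality for [ln^2], concave on [[e, +oo)], then gives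
   [E ||e_k||^2 <= v_k^2], and the two step sizes are handled by the explicit envelopes
   [v_k = rho^k ||e_0|| + B] and [v_k = C / sqrt (k + K)]. *)

From HB Require Import structures.
From mathcomp Require Import all_boot.
From Stdlib Require Import Reals Lra.
Set Implicit Arguments. Unset Strict Implicit. Unset Printing Implicit Defensive.
Open Scope R_scope.

Lemma exp_le_exp x y : x <= y -> exp x <= exp y.
Proof. by case=> [/exp_increasing/Rlt_le | ->]; [| apply: Rle_refl]. Qed.

Lemma ln_le_ln x y : 0 < x -> x <= y -> ln x <= ln y.
Proof. by move=> x_gt0 [/(ln_increasing _ _ x_gt0)/Rlt_le | ->]; [| apply: Rle_refl]. Qed.

Lemma ln_le_sub1 t : 0 < t -> ln t <= t - 1.
Proof. by move=> t_gt0; have := exp_ineq1_le (ln t); rewrite exp_ln //; lra. Qed.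

Lemma exp_convex t x y : 0 <= t <= 1 ->
  exp (t * x + (1 - t) * y) <= t * exp x + (1 - t) * exp y.
Proof.
move=> t01; set z := t * x + (1 - t) * y.
have Ex : exp x = exp z * exp (x - z) by rewrite -exp_plus; f_equal; ring.
have Ey : exp y = exp z * exp (y - z) by rewrite -exp_plus; f_equal; ring.
have ez_gt0 := exp_pos z.
have Hx := Rmult_le_compat_l _ _ _ (Rlt_le _ _ ez_gt0) (exp_ineq1_le (x - z)).
have Hy := Rmult_le_compat_l _ _ _ (Rlt_le _ _ ez_gt0) (exp_ineq1_le (y - z)).
have : t * (exp z * (1 + (x - z))) + (1 - t) * (exp z * (1 + (y - z))) = exp z by rewrite /z; ring.
rewrite Ex Ey; nra.
Qed.

Lemma exp_le_quadratic x : x <= /2 -> exp x <= 1 + x + 2 * x ^ 2.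
Proof.
move=> x_le; have := exp_ineq1_le (- x); rewrite exp_Ropp => Hinv.
have ex_gt0 := exp_pos x.
have : exp x * (1 - x) <= 1.
{ have := Rmult_le_compat_l _ _ _ (Rlt_le _ _ ex_gt0) Hinv.
  by rewrite Rinv_r; lra. }
nra.
Qed.

Lemma rpow_le_tangent th x m : 0 <= th <= 1 -> 0 < x -> 0 < m ->
  exp (th * ln x) <= exp (th * ln m) + th * exp (th * ln m) / m * (x - m).
Proof.
move=> th01 x_gt0 m_gt0.
have Ex : exp (th * ln x) = exp (th * ln m) * exp (th * (ln x - ln m) + (1 - th) * 0).
{ by rewrite -exp_plus; f_equal; ring. }
have Ediv : exp (ln x - ln m) = x / m by rewrite /Rminus exp_plus exp_Ropp !exp_ln.
have := exp_convex (ln x - ln m) 0 th01; rewrite Ediv exp_0 => Hc.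
rewrite Ex; apply: Rle_trans (Rmult_le_compat_l _ _ _ (Rlt_le _ _ (exp_pos _)) Hc) _.
by right; field; lra.
Qed.

Lemma ln_div_antitone y z : 0 < y -> 1 <= ln y -> y <= z -> ln z / z <= ln y / y.
Proof.
move=> y_gt0 lny_ge1 y_le_z.
set t := z / y.
have t_ge1 : 1 <= t by rewrite /t; apply: (Rmult_le_reg_r y); [| field_simplify]; lra.
have -> : z = y * t by rewrite /t; field; lra.
rewrite ln_mult; try lra.
have lnt_le := @ln_le_sub1 t ltac:(lra).
have : ln y + ln t <= t * ln y by nra.
move=> ?; apply: (Rmult_le_reg_r (y * t)); [nra| field_simplify; nra].
Qed.

Lemma derivable_pt_lim_ln_sq y : 0 < y ->
  derivable_pt_lim (fun x => ln x * ln x) y (2 * ln y / y).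
Proof.
move=> y_gt0.
have := derivable_pt_lim_mult _ _ _ _ _ (derivable_pt_lim_ln _ y_gt0) (derivable_pt_lim_ln _ y_gt0).
by have -> : 2 * ln y / y = / y * ln y + ln y * / y by field; lra.
Qed.

(* Concavity of [ln ^ 2] on [[e, +oo)]: its derivative [2 ln x / x] decreases there. *)
Lemma ln_sq_le_tangent x m : 1 <= ln x -> 1 <= ln m -> 0 < x -> 0 < m ->
  ln x * ln x <= ln m * ln m + 2 * ln m / m * (x - m).
Proof.
move=> lnx_ge1 lnm_ge1 x_gt0 m_gt0.
have deriv c : 0 < c -> derivable_pt_lim (fun x => ln x * ln x) c (2 * ln c / c).
{ exact: derivable_pt_lim_ln_sq. }
case: (Rtotal_order x m) => [x_lt_m | [-> | m_lt_x]]; first last.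
- have [c [Ec [mc cx]]] := MVT_cor2 _ _ m x m_lt_x (fun c hc => deriv c ltac:(lra)).
  have := ln_div_antitone m_gt0 lnm_ge1 (Rlt_le _ _ mc).
  rewrite /Rdiv => slope; nra.
- lra.
- have [c [Ec [xc cm]]] := MVT_cor2 _ _ x m x_lt_m (fun c hc => deriv c ltac:(lra)).
  have lnc_ge1 : 1 <= ln c by apply: Rle_trans lnx_ge1 (ln_le_ln x_gt0 (Rlt_le _ _ xc)).
  have := ln_div_antitone (Rlt_trans _ _ _ x_gt0 xc) lnc_ge1 (Rlt_le _ _ cm).
  rewrite /Rdiv => slope; nra.
Qed.

HB.instance Definition _ := Monoid.isComLaw.Build R 0 Rplus
  (fun x y z => esym (Rplus_assoc x y z)) Rplus_comm Rplus_0_l.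
HB.instance Definition _ := Monoid.isComLaw.Build R 1 Rmult
  (fun x y z => esym (Rmult_assoc x y z)) Rmult_comm Rmult_1_l.
HB.instance Definition _ := Monoid.isMulLaw.Build R 0 Rmult Rmult_0_l Rmult_0_r.
HB.instance Definition _ := Monoid.isAddLaw.Build R Rmult Rplus
  Rmult_plus_distr_r Rmult_plus_distr_l.

Lemma rsum_le (I : finType) (F G : I -> R) :
  (forall i, F i <= G i) -> \big[Rplus/0]_(i : I) F i <= \big[Rplus/0]_(i : I) G i.
Proof. by move=> FG; apply: (big_ind2 (fun x y => x <= y)) => *; lra || apply: FG. Qed.

Lemma rprod_ge0 (I : finType) (F : I -> R) :
  (forall i, 0 <= F i) -> 0 <= \big[Rmult/1]_(i : I) F i.
Proof. by move=> F_ge0; apply: (big_ind (fun x => 0 <= x)) => *; nra || apply: F_ge0. Qed.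

Lemma rsum_const (I : finType) c : \big[Rplus/0]_(i : I) c = INR #|I| * c.
Proof.
rewrite big_const; elim: #|I| => [|n IH]; first by rewrite /=; lra.
by rewrite S_INR [iter _ _ _]/= IH; lra.
Qed.

Section Sampling.
Variables (S A : finType) (P : A -> S -> S -> R).
Hypothesis P_ge0 : forall a s s', 0 <= P a s s'.
Hypothesis P_sum1 : forall a s, \big[Rplus/0]_(s' : S) P a s s' = 1.

Lemma sample_prob_ge0 sigma : 0 <= sample_prob P sigma.
Proof. by apply: rprod_ge0 => p. Qed.

Lemma sample_prob_sum1 : \big[Rplus/0]_(sigma : {ffun S * A -> S}) sample_prob P sigma = 1.
Proof. by rewrite -(bigA_distr_bigA (fun p s => P p.2 p.1 s)) big1 // => p _. Qed.

Lemma sample_prob_marginal (p0 : S * A) (g : S -> R) :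
  \big[Rplus/0]_(sigma : {ffun S * A -> S}) (sample_prob P sigma * g (sigma p0))
  = \big[Rplus/0]_(s' : S) (P p0.2 p0.1 s' * g s').
Proof.
pose F (p : S * A) (s : S) := P p.2 p.1 s * (if p == p0 then g s else 1).
have EF (sigma : {ffun S * A -> S}) :
    sample_prob P sigma * g (sigma p0) = \big[Rmult/1]_(p : S * A) F p (sigma p).
{ rewrite /sample_prob (bigD1 p0) //= [RHS](bigD1 p0) //= /F eqxx.
  rewrite [in RHS](eq_bigr (fun p => P p.2 p.1 (sigma p))); first lra.
  by move=> p /negbTE ->; lra. }
rewrite (eq_bigr _ (fun sigma _ => EF sigma)) -(bigA_distr_bigA F).
rewrite (bigD1 p0) //= [X in _ * X]big1 => [|p /negbTE p_neq].
- by rewrite Rmult_1_r; apply: eq_bigr => s _; rewrite /F eqxx.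
- by rewrite -(P_sum1 p.2 p.1); apply: eq_bigr => s _; rewrite /F p_neq Rmult_1_r.
Qed.

Lemma sample_prob_sum_marginal (F : S * A -> S -> R) :
  \big[Rplus/0]_(sigma : {ffun S * A -> S})
      (sample_prob P sigma * \big[Rplus/0]_(p : S * A) F p (sigma p))
  = \big[Rplus/0]_(p : S * A) \big[Rplus/0]_(s' : S) (P p.2 p.1 s' * F p s').
Proof.
rewrite (eq_bigr (fun sigma => \big[Rplus/0]_p (sample_prob P sigma * F p (sigma p))));
  last by move=> sigma _; rewrite big_distrr.
by rewrite exchange_big; apply: eq_bigr => p _; rewrite sample_prob_marginal.
Qed.
End Sampling.

Section Expectation.
Variables (S A : finType) (P : A -> S -> S -> R) (rew : S -> A -> R) (beta : R) (eps : nat -> R).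
Hypothesis P_ge0 : forall a s s', 0 <= P a s s'.
Hypothesis P_sum1 : forall a s, \big[Rplus/0]_(s' : S) P a s s' = 1.
Local Notation Ev := (Ev P rew beta eps).

Lemma Ev_succ k0 n f Q : Ev k0 n.+1 f Q =
  \big[Rplus/0]_sigma (sample_prob P sigma * Ev k0.+1 n f (qstep rew beta eps k0 Q sigma)).
Proof. by []. Qed.

Lemma Ev_le k0 n (f g : (S -> A -> R) -> R) Q :
  (forall Q, f Q <= g Q) -> Ev k0 n f Q <= Ev k0 n g Q.
Proof.
move=> fg; elim: n k0 Q => [|n IH] k0 Q //=.
apply: rsum_le => sigma; apply: Rmult_le_compat_l; [exact: sample_prob_ge0 | exact: IH].
Qed.

Lemma Ev_affine k0 n a b (f : (S -> A -> R) -> R) Q :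
  Ev k0 n (fun Q => a + b * f Q) Q = a + b * Ev k0 n f Q.
Proof.
elim: n k0 Q => [|n IH] k0 Q //=.
rewrite (eq_bigr (fun sigma => a * sample_prob P sigma +
   b * (sample_prob P sigma * Ev k0.+1 n f (qstep rew beta eps k0 Q sigma)))).
- by rewrite big_split /= -!big_distrr /= sample_prob_sum1 // Rmult_1_r.
- by move=> sigma _; rewrite IH; ring.
Qed.

Lemma Ev_scale k0 n b (f : (S -> A -> R) -> R) Q :
  Ev k0 n (fun Q => b * f Q) Q = b * Ev k0 n f Q.
Proof.
rewrite -(Rplus_0_l (b * _)) -Ev_affine.
by apply: Rle_antisym; apply: Ev_le => Q'; lra.
Qed.

Lemma Ev_ge k0 n (g : (S -> A -> R) -> R) a Q :
  (forall Q, a <= g Q) -> a <= Ev k0 n g Q.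
Proof.
move=> a_le.
have <- : Ev k0 n (fun Q => a + 0 * g Q) Q = a by rewrite Ev_affine; ring.
by apply: Ev_le => Q'; have := a_le Q'; lra.
Qed.

Lemma Ev_succ_last k0 n f Q :
  Ev k0 n.+1 f Q = Ev k0 n (fun Q' => Ev (k0 + n)%nat 1 f Q') Q.
Proof.
elim: n k0 Q => [|n IH] k0 Q; first by rewrite /= addn0.
by rewrite !Ev_succ; apply: eq_bigr => sigma _; rewrite IH addSnnS.
Qed.

Lemma Ev_le_tangent (phi : R -> R) slope k0 n (g : (S -> A -> R) -> R) Q :
  (forall Q', phi (g Q') <= phi (Ev k0 n g Q) + slope * (g Q' - Ev k0 n g Q)) ->
  Ev k0 n (fun Q' => phi (g Q')) Q <= phi (Ev k0 n g Q).
Proof.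
set m := Ev k0 n g Q => tangent.
have <- : Ev k0 n (fun Q' => (phi m - slope * m) + slope * g Q') Q = phi m.
{ by rewrite Ev_affine -/m; ring. }
by apply: Ev_le => Q'; have := tangent Q'; lra.
Qed.

Lemma Ev_rpow_le th k0 n (g : (S -> A -> R) -> R) Q :
  0 <= th <= 1 -> (forall Q, 1 <= g Q) ->
  Ev k0 n (fun Q' => exp (th * ln (g Q'))) Q <= exp (th * ln (Ev k0 n g Q)).
Proof.
move=> th01 g_ge1; have m_ge1 := Ev_ge k0 n Q g_ge1.
apply: (Ev_le_tangent (phi := fun x => exp (th * ln x))) => Q'.
by apply: rpow_le_tangent; have := g_ge1 Q'; lra.
Qed.

Lemma Ev_ln_sq_le k0 n (g : (S -> A -> R) -> R) Q :
  (forall Q, exp 1 <= g Q) ->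
  Ev k0 n (fun Q' => ln (g Q') * ln (g Q')) Q <= ln (Ev k0 n g Q) * ln (Ev k0 n g Q).
Proof.
move=> g_ge; have m_ge := Ev_ge k0 n Q g_ge; have e_gt0 := exp_pos 1.
have ln_ge1 x : exp 1 <= x -> 1 <= ln x by move=> x_ge; rewrite -(ln_exp 1); apply: ln_le_ln.
apply: (Ev_le_tangent (phi := fun x => ln x * ln x)) => Q'; have := g_ge Q'.
by move=> gQ_ge; apply: ln_sq_le_tangent; try apply: ln_ge1; lra.
Qed.
End Expectation.

Lemma foldl_Rmax_ge (T : Type) (f : T -> R) l x0 :
  x0 <= foldl Rmax x0 (map f l) /\ forall y, List.In y l -> f y <= foldl Rmax x0 (map f l).
Proof.
elim: l x0 => [|y l IH] x0 /=; first by split=> [|? []]; lra.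
have [H1 H2] := IH (Rmax x0 (f y)).
have m_l := Rmax_l x0 (f y); have m_r := Rmax_r x0 (f y).
by split=> [|z [<- | /H2]]; lra.
Qed.

Lemma foldl_Rmax_attained (T : Type) (f : T -> R) l x0 :
  foldl Rmax x0 (map f l) = x0 \/ exists y, foldl Rmax x0 (map f l) = f y.
Proof.
elim: l x0 => [|y l IH] x0 /=; first by left.
case: (IH (Rmax x0 (f y))) => [->|]; last by right.
case: (Rle_dec x0 (f y)) => [x0_le | x0_gt].
- by right; exists y; rewrite Rmax_right.
- by left; rewrite Rmax_left //; lra.
Qed.

Section MaxNorm.
Variables (S A : finType).
Implicit Types Q : S -> A -> R.

Lemma maxA_ge Q s a : Q s a <= maxA Q s.
Proof.
rewrite /maxA; have : a \in enum A by rewrite mem_enum.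
case: (enum A) => [//|b l]; rewrite inE => /orP[/eqP -> | a_in].
- by have [] := foldl_Rmax_ge (Q s) l (Q s b).
- have [_] := foldl_Rmax_ge (Q s) l (Q s b); apply.
  by elim: l a_in => [//|c l IH] /=; rewrite inE => /orP[/eqP ->|/IH]; [left | right].
Qed.

Lemma maxA_attained (a0 : A) Q s : exists a, maxA Q s = Q s a.
Proof.
rewrite /maxA; have : a0 \in enum A by rewrite mem_enum.
case: (enum A) => [//|b l] _.
by case: (foldl_Rmax_attained (Q s) l (Q s b)) => [->|[y ->]]; eexists.
Qed.

Lemma supnorm_ge Q s a : Rabs (Q s a) <= supnorm Q.
Proof.
rewrite /supnorm; have : (s, a) \in index_enum (S * A)%type by rewrite mem_index_enum.
elim: (index_enum _) => [//|p r IH]; rewrite big_cons inE => /orP[/eqP <- | /IH].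
- exact: Rmax_l.
- by move/Rle_trans; apply; apply: Rmax_r.
Qed.

Lemma supnorm_ge0 Q : 0 <= supnorm Q.
Proof.
apply: (big_ind (fun x => 0 <= x)) => [|x y x_ge0 _|p _]; [lra | | exact: Rabs_pos].
exact: Rle_trans x_ge0 (Rmax_l _ _).
Qed.

Lemma supnorm_attained Q :
  supnorm Q = 0 \/ exists p : S * A, supnorm Q = Rabs (Q p.1 p.2).
Proof.
apply: (big_ind (fun x => x = 0 \/ exists p : S * A, x = Rabs (Q p.1 p.2)));
  [by left | move=> x y Hx Hy | by move=> p _; right; exists p].
by case: (Rle_dec x y) => xy; [rewrite Rmax_right | rewrite Rmax_left //; lra].
Qed.

Lemma maxA_abs_le (a0 : A) Q s : Rabs (maxA Q s) <= supnorm Q.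
Proof. by have [a ->] := maxA_attained a0 Q s; apply: supnorm_ge. Qed.

Lemma maxA_lipschitz (a0 : A) Q Q' s :
  Rabs (maxA Q s - maxA Q' s) <= supnorm (Qsub Q Q').
Proof.
have [a1 E1] := maxA_attained a0 Q s; have [a2 E2] := maxA_attained a0 Q' s.
have := maxA_ge Q s a2; have := maxA_ge Q' s a1.
have := supnorm_ge (Qsub Q Q') s a1; have := supnorm_ge (Qsub Q Q') s a2.
by rewrite /Qsub => ? ? ? ?; apply: Rabs_le; split_Rabs; lra.
Qed.
End MaxNorm.

Section CoshSum.
Variable I : finType.
Implicit Type y : I -> R.

(* Twice the sum of the [cosh (y i)]: a smooth surrogate for [exp (max_i |y i|)]. *)
Definition cosh_sum y := \big[Rplus/0]_(i : I) (exp (y i) + exp (- y i)).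

Lemma exp_add_exp_opp_ge2 u : 2 <= exp u + exp (- u).
Proof. by have := exp_ineq1_le u; have := exp_ineq1_le (- u); lra. Qed.

Lemma cosh_sum_ge y : 2 * INR #|I| <= cosh_sum y.
Proof.
rewrite -[2 * _]Rmult_comm -rsum_const.
by apply: rsum_le => i; apply: exp_add_exp_opp_ge2.
Qed.

Lemma exp_abs_le_cosh_sum y i : exp (Rabs (y i)) <= cosh_sum y.
Proof.
rewrite /cosh_sum (bigD1 i) //=.
have : 0 <= \big[Rplus/0]_(j | j != i) (exp (y j) + exp (- y j)).
{ apply: (big_ind (fun x => 0 <= x)) => [|*|j _]; first lra; first lra.
  by have := exp_pos (y j); have := exp_pos (- y j); lra. }
have := exp_pos (y i); have := exp_pos (- y i).
by rewrite /Rabs; case: Rcase_abs; lra.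
Qed.

Lemma cosh_sum_le y M : (forall i, Rabs (y i) <= M) ->
  cosh_sum y <= 2 * INR #|I| * exp M.
Proof.
move=> y_le; have -> : 2 * INR #|I| * exp M = INR #|I| * (2 * exp M) by ring.
rewrite -rsum_const; apply: rsum_le => i.
have [/exp_le_exp ? /exp_le_exp ?] : y i <= M /\ - y i <= M.
{ by have := y_le i; split_Rabs; lra. }
lra.
Qed.

Hypothesis I_gt0 : (0 < #|I|)%nat.

Lemma cosh_sum_ge1 y : 1 <= cosh_sum y.
Proof.
have := cosh_sum_ge y; have : 1 <= INR #|I| by apply: (le_INR 1%nat); apply/leP.
lra.
Qed.

Lemma cosh_sum_gt0 y : 0 < cosh_sum y.
Proof. by have := cosh_sum_ge1 y; lra. Qed.

(* Hoelder's inequality between the power means of order [th] and [1]. *)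
Lemma cosh_sum_scale_le th y : 0 <= th <= 1 ->
  cosh_sum (fun i => th * y i)
  <= exp ((1 - th) * ln (2 * INR #|I|) + th * ln (cosh_sum y)).
Proof.
move=> th01; set n := INR #|I|.
have n_gt0 : 0 < n by apply: lt_0_INR; apply/ltP.
set L := ln (cosh_sum y); set c := ln (2 * n).
set X := exp (th * L + (1 - th) * c).
have G_gt0 := cosh_sum_gt0 y.
have key u : exp (th * u) <= (th * (exp u / cosh_sum y) + (1 - th) * / (2 * n)) * X.
{ have -> : th * u = th * (u - L) + (1 - th) * (- c) + (th * L + (1 - th) * c) by ring.
  rewrite exp_plus; apply: Rmult_le_compat_r; first exact: Rlt_le (exp_pos _).
  apply: Rle_trans (exp_convex _ _ th01) _.
  by rewrite /Rminus exp_plus !exp_Ropp /L /c !exp_ln; lra. }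
apply: Rle_trans (_ : \big[Rplus/0]_i (X * th / cosh_sum y * (exp (y i) + exp (- y i))
                                        + X * (1 - th) * / n) <= _).
- apply: rsum_le => i; rewrite Ropp_mult_distr_r.
  have := key (y i); have := key (- y i).
  have -> : X * th / cosh_sum y * (exp (y i) + exp (- y i)) + X * (1 - th) * / n
    = (th * (exp (y i) / cosh_sum y) + (1 - th) * / (2 * n)) * X
      + (th * (exp (- y i) / cosh_sum y) + (1 - th) * / (2 * n)) * X by field; lra.
  lra.
- rewrite big_split /= -big_distrr rsum_const -/n /=.
  by rewrite /X /c /L (Rplus_comm ((1 - th) * _)); right; fold (cosh_sum y); field; lra.
Qed.

Lemma cosh_sum_scale_ge r y : 1 <= r -> cosh_sum (fun i => r * y i) <= exp (r * ln (cosh_sum y)).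
Proof.
move=> r_ge1; have G_gt0 := cosh_sum_gt0 y; set L := ln (cosh_sum y).
have key u : exp u <= cosh_sum y -> exp (r * u) <= exp (u - L) * exp (r * L).
{ move=> eu_le; rewrite -exp_plus; apply: exp_le_exp.
  have : u <= L by rewrite /L -(ln_exp u); apply: ln_le_ln; [exact: exp_pos |].
  nra. }
apply: Rle_trans (_ : \big[Rplus/0]_i (exp (r * L) / cosh_sum y * (exp (y i) + exp (- y i))) <= _).
- apply: rsum_le => i; rewrite Ropp_mult_distr_r.
  have ey := exp_abs_le_cosh_sum y i.
  have [/exp_le_exp e1 /exp_le_exp e2] : y i <= Rabs (y i) /\ - y i <= Rabs (y i).
  { by split_Rabs; lra. }
  have := key (y i) (Rle_trans _ _ _ e1 ey); have := key (- y i) (Rle_trans _ _ _ e2 ey).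
  rewrite /Rminus !exp_plus !exp_Ropp /L exp_ln // => h1 h2.
  apply: Rle_trans (Rplus_le_compat _ _ _ _ h2 h1) _; right.
  by field; have := exp_pos (y i); lra.
- by rewrite -big_distrr /=; fold (cosh_sum y); right; field; lra.
Qed.
End CoshSum.

(* By [exp x <= 1 + x + 2 x^2] for [x <= 1/2]; centring kills the linear term. *)
Lemma centered_mgf_le (T : finType) (q W : T -> R) (t c : R) :
  (forall s, 0 <= q s) -> \big[Rplus/0]_(s : T) q s = 1 ->
  \big[Rplus/0]_(s : T) (q s * W s) = 0 ->
  (forall s, Rabs (W s) <= c) -> Rabs t * c <= / 2 ->
  \big[Rplus/0]_(s : T) (q s * exp (t * W s)) <= exp (2 * t ^ 2 * c ^ 2).
Proof.
move=> q_ge0 q_sum1 W_mean0 W_le tc_le.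
have tW_le s : Rabs (t * W s) <= Rabs t * c.
{ by rewrite Rabs_mult; apply: Rmult_le_compat_l; [exact: Rabs_pos | exact: W_le]. }
apply: Rle_trans (_ : \big[Rplus/0]_s ((1 + 2 * (t ^ 2 * c ^ 2)) * q s + t * (q s * W s)) <= _).
- apply: rsum_le => s.
  have sq_le : (t * W s) ^ 2 <= t ^ 2 * c ^ 2.
  { rewrite -(pow2_abs (t * W s)) -(pow2_abs t) -Rpow_mult_distr.
    by apply: pow_incr; split; [exact: Rabs_pos | exact: tW_le]. }
  have exp_le : exp (t * W s) <= 1 + t * W s + 2 * (t ^ 2 * c ^ 2).
  { have := exp_le_quadratic (Rle_trans _ _ _ (Rle_abs _) (Rle_trans _ _ _ (tW_le s) tc_le)).
    lra. }
  by apply: Rle_trans (Rmult_le_compat_l _ _ _ (q_ge0 s) exp_le) _; right; ring.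
- rewrite big_split /= -!big_distrr /= q_sum1 W_mean0.
  by have := exp_ineq1_le (2 * t ^ 2 * c ^ 2); simpl; lra.
Qed.

Section QLearning.
Variables (S A : finType) (P : A -> S -> S -> R) (rew : S -> A -> R) (beta : R).
Variables (Qstar : S -> A -> R) (a0 : A).
Hypothesis P_ge0 : forall a s s', 0 <= P a s s'.
Hypothesis P_sum1 : forall a s, \big[Rplus/0]_(s' : S) P a s s' = 1.
Hypothesis beta01 : 0 < beta < 1.
Hypothesis Qstar_fixed : forall s a, bellman P rew beta Qstar s a = Qstar s a.
Hypothesis card_SA_ge2 : (2 <= #|S| * #|A|)%nat.

Definition err (Q : S -> A -> R) (p : S * A) := Q p.1 p.2 - Qstar p.1 p.2.

Definition potential lam Q := cosh_sum (fun p : S * A => lam * err Q p).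

Definition bellman_mean (p : S * A) :=
  \big[Rplus/0]_(s' : S) (P p.2 p.1 s' * maxA Qstar s').

Definition noise (p : S * A) (s' : S) := beta * (maxA Qstar s' - bellman_mean p).

Definition c_noise := 1 + 2 * supnorm Qstar.

Definition lnN2 := ln (2 * INR (#|S| * #|A|)).
Local Notation lnN := (ln (INR (#|S| * #|A|))).

Lemma card_SA_gt0 : (0 < #|{: S * A}|)%nat.
Proof. by rewrite card_prod (leq_trans _ card_SA_ge2). Qed.

Lemma INR_card_SA_ge2 : 2 <= INR (#|S| * #|A|).
Proof. by apply: (le_INR 2); apply/leP. Qed.

Lemma potential_ge1 lam Q : 1 <= potential lam Q.
Proof. exact: cosh_sum_ge1 card_SA_gt0 _. Qed.

Lemma exp1_le_potential lam Q : exp 1 <= potential lam Q.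
Proof.
have := cosh_sum_ge (fun p : S * A => lam * err Q p).
by rewrite card_prod; have := INR_card_SA_ge2; have := exp_le_3; rewrite /potential; lra.
Qed.

Lemma lam_supnorm_le_ln_potential lam Q :
  0 <= lam -> lam * supnorm (Qsub Q Qstar) <= ln (potential lam Q).
Proof.
move=> lam_ge0; have := potential_ge1 lam Q.
case: (supnorm_attained (Qsub Q Qstar)) => [-> | [p ->]] pot_ge1.
- by rewrite Rmult_0_r -ln_1; apply: ln_le_ln; lra.
- rewrite -(ln_exp (lam * _)); apply: ln_le_ln; first exact: exp_pos.
  apply: Rle_trans (exp_abs_le_cosh_sum (fun p => lam * err Q p) p).
  by rewrite Rabs_mult (Rabs_pos_eq lam lam_ge0); right.
Qed.

Lemma ln_potential_le lam Q :
  0 <= lam -> ln (potential lam Q) <= lnN2 + lam * supnorm (Qsub Q Qstar).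
Proof.
move=> lam_ge0; have N_gt0 := INR_card_SA_ge2.
rewrite -[lnN2 + _]ln_exp exp_plus /lnN2 exp_ln; last lra.
apply: ln_le_ln; first exact: Rlt_le_trans Rlt_0_1 (potential_ge1 _ _).
rewrite -card_prod; apply: cosh_sum_le => -[s a].
rewrite Rabs_mult (Rabs_pos_eq lam lam_ge0).
by apply: Rmult_le_compat_l => //; apply: supnorm_ge (Qsub Q Qstar) s a.
Qed.

Lemma ln_potential_scale lam lam' Q : 0 < lam -> lam <= lam' ->
  ln (potential lam' Q) <= lam' / lam * ln (potential lam Q).
Proof.
move=> lam_gt0 lam_le.
have -> : potential lam' Q = cosh_sum (fun p : S * A => lam' / lam * (lam * err Q p)).
{ by apply: eq_bigr => p _; congr (exp _ + exp (- _)); field; lra. }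
rewrite -(ln_exp (lam' / lam * _)); apply: ln_le_ln.
- exact: cosh_sum_gt0 card_SA_gt0 _.
- apply: (cosh_sum_scale_ge card_SA_gt0 (fun p => lam * err Q p)).
  by apply: (Rmult_le_reg_r lam); [| field_simplify]; lra.
Qed.

Lemma rsum_P_mul p (c : R) : \big[Rplus/0]_(s' : S) (P p.2 p.1 s' * c) = c.
Proof. by rewrite -big_distrl /= P_sum1; ring. Qed.

Lemma bellman_mean_abs_le p : Rabs (bellman_mean p) <= supnorm Qstar.
Proof.
have maxA_le s' : - supnorm Qstar <= maxA Qstar s' <= supnorm Qstar.
{ by have := maxA_abs_le a0 Qstar s'; split_Rabs; lra. }
apply: Rabs_le; split.
- rewrite -(rsum_P_mul p (- _)); apply: rsum_le => s'.
  by apply: Rmult_le_compat_l; [| case: (maxA_le s')].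
- rewrite -(rsum_P_mul p (supnorm Qstar)); apply: rsum_le => s'.
  by apply: Rmult_le_compat_l; [| case: (maxA_le s')].
Qed.

Lemma noise_abs_le p s' : Rabs (noise p s') <= c_noise.
Proof.
have := bellman_mean_abs_le p; have := maxA_abs_le a0 Qstar s'.
have := supnorm_ge0 Qstar; rewrite /noise /c_noise Rabs_mult (Rabs_pos_eq beta); last lra.
move=> ? ? ?; have : Rabs (maxA Qstar s' - bellman_mean p) <= 2 * supnorm Qstar.
{ by split_Rabs; lra. }
have := Rabs_pos (maxA Qstar s' - bellman_mean p); nra.
Qed.

Lemma noise_mean0 p : \big[Rplus/0]_(s' : S) (P p.2 p.1 s' * noise p s') = 0.
Proof.
rewrite (eq_bigr (fun s' => beta * (P p.2 p.1 s' * maxA Qstar s')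
                           + P p.2 p.1 s' * (- beta * bellman_mean p))).
- by rewrite big_split /= -big_distrr /= rsum_P_mul /bellman_mean; ring.
- by move=> s' _; rewrite /noise; ring.
Qed.

Lemma err_qstep eps j Q (sigma : {ffun S * A -> S}) p :
  err (qstep rew beta eps j Q sigma) p =
  (1 - eps j) * err Q p + eps j * (beta * (maxA Q (sigma p) - maxA Qstar (sigma p)))
  + eps j * noise p (sigma p).
Proof.
case: p => s a; rewrite /err /qstep /noise /bellman_mean /=.
set m := \big[Rplus/0]_s' _.
have -> : Qstar s a = rew s a + beta * m by rewrite -(Qstar_fixed s a).
ring.
Qed.

Lemma potential_qstep_le eps j lam Q (sigma : {ffun S * A -> S}) :
  0 <= lam -> 0 <= eps j ->
  potential lam (qstep rew beta eps j Q sigma) <=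
  exp (lam * eps j * beta * supnorm (Qsub Q Qstar)) *
  \big[Rplus/0]_(p : S * A)
     (exp ((1 - eps j) * (lam * err Q p)) * exp (lam * eps j * noise p (sigma p))
      + exp (- ((1 - eps j) * (lam * err Q p))) * exp (- (lam * eps j) * noise p (sigma p))).
Proof.
move=> lam_ge0 eps_ge0; rewrite big_distrr /potential /cosh_sum; apply: rsum_le => p /=.
have D_le : Rabs (beta * (maxA Q (sigma p) - maxA Qstar (sigma p)))
             <= beta * supnorm (Qsub Q Qstar).
{ rewrite Rabs_mult Rabs_pos_eq; last lra.
  by apply: Rmult_le_compat_l; [lra | exact: maxA_lipschitz]. }
rewrite err_qstep; set D := beta * (_ - _) in D_le *.
have [D_le1 D_le2] : D <= beta * supnorm (Qsub Q Qstar) /\ - D <= beta * supnorm (Qsub Q Qstar).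
{ by split_Rabs; lra. }
have lam_eps_ge0 := Rmult_le_pos _ _ lam_ge0 eps_ge0.
rewrite [X in _ <= X]Rmult_plus_distr_l -!exp_plus.
by apply: Rplus_le_compat; apply: exp_le_exp; nra.
Qed.

Lemma noise_mgf_le p tau : Rabs tau * c_noise <= / 2 ->
  \big[Rplus/0]_(s' : S) (P p.2 p.1 s' * exp (tau * noise p s'))
  <= exp (2 * tau ^ 2 * c_noise ^ 2).
Proof.
apply: centered_mgf_le; [exact: P_ge0 | exact: P_sum1 | exact: noise_mean0 | exact: noise_abs_le].
Qed.

Lemma noise_exp_pair_le p y t : 0 <= t -> t * c_noise <= / 2 ->
  \big[Rplus/0]_(s' : S) (P p.2 p.1 s' *
     (exp y * exp (t * noise p s') + exp (- y) * exp (- t * noise p s')))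
  <= exp (2 * t ^ 2 * c_noise ^ 2) * (exp y + exp (- y)).
Proof.
move=> t_ge0 small.
rewrite (eq_bigr (fun s' => exp y * (P p.2 p.1 s' * exp (t * noise p s'))
                           + exp (- y) * (P p.2 p.1 s' * exp (- t * noise p s'))));
  last by move=> s' _; ring.
rewrite big_split /= -!big_distrr /=.
have t_small : Rabs t * c_noise <= / 2 by rewrite Rabs_pos_eq.
have mt_small : Rabs (- t) * c_noise <= / 2 by rewrite Rabs_Ropp Rabs_pos_eq.
have := noise_mgf_le p mt_small; rewrite (_ : (- t) ^ 2 = t ^ 2); last ring.
move/(Rmult_le_compat_l _ _ _ (Rlt_le _ _ (exp_pos (- y)))) => minus_le.
have /(Rmult_le_compat_l _ _ _ (Rlt_le _ _ (exp_pos y))) plus_le := noise_mgf_le p t_small.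
by apply: Rle_trans (Rplus_le_compat _ _ _ _ plus_le minus_le) _; right; simpl; ring.
Qed.

(* Bound the new potential pointwise in the samples, integrate out each sample with the
   sub-Gaussian bound, and compare the remaining [cosh_sum] at scale [(1 - eps j) lam]
   with [potential lam] by Hoelder. *)
Lemma Ev_potential_step_le eps j lam Q :
  0 <= eps j <= 1 -> 0 <= lam -> lam * eps j * c_noise <= / 2 ->
  Ev P rew beta eps j 1 (potential lam) Q <=
  exp (2 * (lam * eps j) ^ 2 * c_noise ^ 2 + lam * eps j * beta * supnorm (Qsub Q Qstar)
       + (eps j * lnN2 + (1 - eps j) * ln (potential lam Q))).
Proof.
move=> eps01 lam_ge0 small.
set t := lam * eps j; set B := exp (2 * t ^ 2 * c_noise ^ 2).
set C := exp (t * beta * supnorm (Qsub Q Qstar)).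
set y := fun p => (1 - eps j) * (lam * err Q p).
have t_ge0 : 0 <= t by apply: Rmult_le_pos; lra.
have per_pair p : \big[Rplus/0]_(s' : S) (P p.2 p.1 s' *
      (exp (y p) * exp (t * noise p s') + exp (- y p) * exp (- t * noise p s')))
    <= B * (exp (y p) + exp (- y p)).
{ by apply: noise_exp_pair_le => //; rewrite /t; lra. }
rewrite Ev_succ.
apply: Rle_trans (_ : \big[Rplus/0]_sigma (sample_prob P sigma * (C *
   \big[Rplus/0]_p (exp (y p) * exp (t * noise p (sigma p))
                   + exp (- y p) * exp (- t * noise p (sigma p))))) <= _).
{ apply: rsum_le => sigma; apply: Rmult_le_compat_l; first exact: sample_prob_ge0.
  by apply: potential_qstep_le; lra. }
rewrite (eq_bigr (fun sigma => C * (sample_prob P sigma *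
   \big[Rplus/0]_p (exp (y p) * exp (t * noise p (sigma p))
                   + exp (- y p) * exp (- t * noise p (sigma p))))));
  last by move=> sigma _; rewrite -Rmult_assoc (Rmult_comm _ C) Rmult_assoc.
rewrite -big_distrr /= (sample_prob_sum_marginal P_sum1 (fun p s' =>
  exp (y p) * exp (t * noise p s') + exp (- y p) * exp (- t * noise p s'))).
apply: Rle_trans (_ : C * (B * cosh_sum y) <= _).
{ apply: Rmult_le_compat_l; first exact: Rlt_le (exp_pos _).
  by rewrite /cosh_sum big_distrr; apply: rsum_le => p; apply: per_pair. }
have := cosh_sum_scale_le card_SA_gt0 (fun p => lam * err Q p) (th := 1 - eps j) ltac:(lra).
rewrite card_prod -/lnN2 -/y (_ : 1 - (1 - eps j) = eps j); last ring.
move=> cosh_le.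
have -> : exp (2 * t ^ 2 * c_noise ^ 2 + t * beta * supnorm (Qsub Q Qstar)
             + (eps j * lnN2 + (1 - eps j) * ln (potential lam Q)))
          = C * (B * exp (eps j * lnN2 + (1 - eps j) * ln (potential lam Q))).
{ by rewrite /B /C !exp_plus; ring. }
apply: Rmult_le_compat_l; first exact: Rlt_le (exp_pos _).
by apply: Rmult_le_compat_l; first exact: Rlt_le (exp_pos _).
Qed.

(* Combining the one-step bound with [lam' ||Q - Q*|| <= ln (potential lam' Q)] and the
   rescaling [lam -> lam'] gives the contraction factor [1 - eps (1 - beta)]. *)
Lemma Ev_potential_step_rescaled eps j lam lam' Q :
  0 < eps j <= 1 -> 0 < lam -> lam <= lam' -> lam' * eps j * c_noise <= / 2 ->
  Ev P rew beta eps j 1 (potential lam') Q <=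
  exp (2 * lam' ^ 2 * eps j ^ 2 * c_noise ^ 2 + eps j * lnN2)
  * exp ((1 - eps j * (1 - beta)) * (lam' / lam) * ln (potential lam Q)).
Proof.
move=> eps01 lam_gt0 lam_le small.
apply: Rle_trans (Ev_potential_step_le Q _ _ _) _; try lra.
rewrite -exp_plus; apply: exp_le_exp.
have sup_le := lam_supnorm_le_ln_potential Q (Rlt_le _ _ (Rlt_le_trans _ _ _ lam_gt0 lam_le)).
have scale := ln_potential_scale Q lam_gt0 lam_le.
have L_ge0 : 0 <= ln (potential lam Q).
{ by rewrite -ln_1; apply: ln_le_ln; [lra | apply: potential_ge1]. }
have contr_ge0 : 0 <= 1 - eps j * (1 - beta) by nra.
have := Rmult_le_compat_l (eps j * beta) _ _ ltac:(nra) sup_le.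
have := Rmult_le_compat_l _ _ _ contr_ge0 scale.
nra.
Qed.

Section Envelope.
Variables (eps lam v : nat -> R) (Q0 : S -> A -> R).
Hypothesis eps01 : forall j, 0 < eps j <= 1.
Hypothesis lam_gt0 : forall j, 0 < lam j.
Hypothesis lam_nondecr : forall j, lam j <= lam j.+1.
Hypothesis lam_contract : forall j, lam j.+1 * (1 - eps j * (1 - beta)) <= lam j.
Hypothesis lam_eps_le : forall j, lam j.+1 * eps j * c_noise <= / 2.
Hypothesis v0_ge : lnN2 / lam 0 + supnorm (Qsub Q0 Qstar) <= v 0.
Hypothesis v_succ_ge : forall j,
  (1 - eps j * (1 - beta)) * v j + 2 * lam j.+1 * eps j ^ 2 * c_noise ^ 2
  + eps j * lnN2 / lam j.+1 <= v j.+1.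

Local Notation E := (Ev P rew beta eps 0).

Lemma ln_Ev_potential_le k : ln (E k (potential (lam k)) Q0) <= lam k * v k.
Proof.
elim: k => [|k IH].
- apply: Rle_trans (ln_potential_le Q0 (Rlt_le _ _ (lam_gt0 0))) _.
  have := Rmult_le_compat_l _ _ _ (Rlt_le _ _ (lam_gt0 0)) v0_ge.
  by rewrite Rmult_plus_distr_l /Rdiv -Rmult_assoc Rinv_r_simpl_m //; have := lam_gt0 0; lra.
- have lam_k := lam_gt0 k; have lam_k1 := lam_gt0 k.+1; have eps_k := eps01 k.
  set a := 2 * lam k.+1 ^ 2 * eps k ^ 2 * c_noise ^ 2 + eps k * lnN2.
  set th := (1 - eps k * (1 - beta)) * (lam k.+1 / lam k).
  have th01 : 0 <= th <= 1.
  { have := lam_contract k; rewrite /th; split.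
    + by apply: Rmult_le_pos; [nra | apply: Rlt_le; apply: Rdiv_lt_0_compat].
    + by apply: (Rmult_le_reg_r (lam k)); [| field_simplify]; lra. }
  rewrite Ev_succ_last add0n.
  apply: Rle_trans (_ : ln (exp a * exp (th * ln (E k (potential (lam k)) Q0))) <= _).
  { apply: ln_le_ln.
    + apply: Rlt_le_trans Rlt_0_1 _; apply: Ev_ge => // Q; apply: Ev_ge => // Q'.
      exact: potential_ge1.
    + apply: Rle_trans (_ : E k (fun Q => exp a * exp (th * ln (potential (lam k) Q))) Q0 <= _).
      { apply: Ev_le => // Q; apply: Ev_potential_step_rescaled;
          [exact: eps01 | exact: lam_gt0 | exact: lam_nondecr | exact: lam_eps_le]. }
      rewrite (Ev_scale _ _ _ P_ge0 P_sum1).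
      apply: Rmult_le_compat_l; first exact: Rlt_le (exp_pos _).
      by apply: Ev_rpow_le => // Q; apply: potential_ge1. }
  rewrite -exp_plus ln_exp.
  have := Rmult_le_compat_l _ _ _ (proj1 th01) IH.
  have := Rmult_le_compat_l _ _ _ (Rlt_le _ _ lam_k1) (v_succ_ge k).
  have -> : th * (lam k * v k) = (1 - eps k * (1 - beta)) * lam k.+1 * v k.
  { by rewrite /th; field; lra. }
  have -> : lam k.+1 * ((1 - eps k * (1 - beta)) * v k + 2 * lam k.+1 * eps k ^ 2 * c_noise ^ 2
             + eps k * lnN2 / lam k.+1)
          = (1 - eps k * (1 - beta)) * lam k.+1 * v k + a by rewrite /a; field; lra.
  lra.
Qed.

Lemma Ev_sq_err_le k :
  E k (fun Q => supnorm (Qsub Q Qstar) ^ 2) Q0 <= v k ^ 2.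
Proof.
have lam_k := lam_gt0 k.
set m := E k (potential (lam k)) Q0.
have m_ge1 : 1 <= m by apply: Ev_ge => // Q; apply: potential_ge1.
have ln_m_ge0 : 0 <= ln m by rewrite -ln_1; apply: ln_le_ln; lra.
have ln_m_le : ln m / lam k <= v k.
{ have := ln_Ev_potential_le k; rewrite -/m => ?.
  by apply: (Rmult_le_reg_r (lam k)); [| field_simplify]; lra. }
apply: Rle_trans (_ : E k (fun Q => / lam k ^ 2
                   * (ln (potential (lam k) Q) * ln (potential (lam k) Q))) Q0 <= _).
{ apply: Ev_le => // Q.
  have := lam_supnorm_le_ln_potential Q (Rlt_le _ _ lam_k).
  have := supnorm_ge0 (Qsub Q Qstar).
  have -> : / lam k ^ 2 * (ln (potential (lam k) Q) * ln (potential (lam k) Q))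
           = (ln (potential (lam k) Q) / lam k) ^ 2 by field; lra.
  move=> ? ?; apply: pow_incr; split => //.
  by apply: (Rmult_le_reg_r (lam k)); [| field_simplify]; lra. }
rewrite (Ev_scale _ _ _ P_ge0 P_sum1).
apply: Rle_trans (Rmult_le_compat_l _ _ _ _ (Ev_ln_sq_le _ _ _ P_ge0 P_sum1 _ _ Q0 _)) _.
- by apply: Rlt_le; apply: Rinv_0_lt_compat; apply: pow_lt.
- exact: exp1_le_potential.
- rewrite -/m (_ : / lam k ^ 2 * (ln m * ln m) = (ln m / lam k) ^ 2); last by field; lra.
  apply: pow_incr; split => //; apply: Rmult_le_pos => //.
  exact: Rlt_le (Rinv_0_lt_compat _ lam_k).
Qed.
End Envelope.

Lemma two_le_exp1 : 2 <= exp 1.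
Proof. by have := exp_ineq1_le 1; lra. Qed.

Lemma ln_card_SA_gt_half : / 2 < lnN.
Proof.
apply: Rlt_le_trans ln_lt_2 _; apply: ln_le_ln; first lra.
exact: INR_card_SA_ge2.
Qed.

Lemma lnN2_le : lnN2 <= 2 * lnN.
Proof.
have N_ge2 := INR_card_SA_ge2.
rewrite /lnN2 ln_mult; try lra.
by have := ln_le_ln Rlt_0_2 N_ge2; lra.
Qed.

Lemma lnN2_gt0 : 0 < lnN2.
Proof.
rewrite /lnN2 -ln_1; apply: ln_increasing; first lra.
by have := INR_card_SA_ge2; lra.
Qed.

Lemma c_noise_ge1 : 1 <= c_noise.
Proof. by have := supnorm_ge0 Qstar; rewrite /c_noise; lra. Qed.

Lemma c_noise_sq_le : c_noise ^ 2 <= 4 * (1 + 2 * supnorm Qstar ^ 2).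
Proof. by have := supnorm_ge0 Qstar; rewrite /c_noise; nra. Qed.

Lemma sq_add_le x y : (x + y) ^ 2 <= 3 / 2 * x ^ 2 + 3 * y ^ 2.
Proof. by have := pow2_ge_0 (x - 2 * y); nra. Qed.

Section ConstantStep.
Variables (eps0 : R) (Q0 : S -> A -> R).
Hypothesis eps0_gt0 : 0 < eps0.
Hypothesis eps0_le : eps0 <= (1 - beta) ^ 2 / (640 * exp 1 * lnN).

Local Notation E0 := (supnorm (Qsub Q0 Qstar)).
(* Balances the terms [lnN2 / lam] and [2 lam eps0 c_noise ^ 2] of the envelope recursion. *)
Let lam0 := sqrt (lnN2 / (2 * eps0 * c_noise ^ 2)).
Local Notation rho := (1 - eps0 * (1 - beta)).
Local Notation Bc := (4 * lam0 * eps0 * c_noise ^ 2 / (1 - beta)).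

Lemma eps0_lnN_le : eps0 * lnN <= / 1280.
Proof.
have lnN_gt := ln_card_SA_gt_half; have e_ge2 := two_le_exp1.
have den_gt0 : 0 < 640 * exp 1 * lnN by nra.
have : eps0 * (640 * exp 1 * lnN) <= (1 - beta) ^ 2.
{ apply: Rle_trans (Rmult_le_compat_r _ _ _ (Rlt_le _ _ den_gt0) eps0_le) _.
  by right; field; lra. }
have : (1 - beta) ^ 2 <= 1 by nra.
have : 0 < eps0 * lnN by apply: Rmult_lt_0_compat; lra.
nra.
Qed.

Lemma lam0_gt0 : 0 < lam0.
Proof.
have := lnN2_gt0; have := c_noise_ge1 => *.
by apply: sqrt_lt_R0; apply: Rdiv_lt_0_compat; [| apply: Rmult_lt_0_compat; [| apply: pow_lt]]; lra.
Qed.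

Lemma lnN2_eq : lnN2 = 2 * lam0 ^ 2 * eps0 * c_noise ^ 2.
Proof.
have := lnN2_gt0; have := c_noise_ge1 => *.
rewrite /lam0 -Rsqr_pow2 Rsqr_sqrt; first by field; repeat split; lra.
by apply: Rlt_le; apply: Rdiv_lt_0_compat; [| apply: Rmult_lt_0_compat; [| apply: pow_lt]]; lra.
Qed.

Lemma Ev_sq_err_le_constant_envelope k :
  Ev P rew beta (fun _ => eps0) 0 k (fun Q => supnorm (Qsub Q Qstar) ^ 2) Q0
  <= (rho ^ k * E0 + Bc) ^ 2.
Proof.
have lam_gt0 := lam0_gt0; have L2_eq := lnN2_eq; have c_ge1 := c_noise_ge1.
have eps_lnN := eps0_lnN_le; have lnN_gt : / 2 < lnN := ln_card_SA_gt_half.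
have eps_le1 : eps0 <= 1 by nra.
apply: (Ev_sq_err_le (lam := fun _ => lam0) (v := fun j => rho ^ j * E0 + Bc))
  => [_|_|_|_|_||j].
- lra.
- exact: lam_gt0.
- exact: Rle_refl.
- have : 0 <= lam0 * (eps0 * (1 - beta)) by apply: Rmult_le_pos; nra.
  lra.
- have : (lam0 * eps0 * c_noise) ^ 2 <= / 4.
  { rewrite (_ : (lam0 * eps0 * c_noise) ^ 2 = lnN2 * eps0 / 2); last by rewrite L2_eq; field.
    by have := lnN2_le;  nra. }
  have : 0 <= lam0 * eps0 * c_noise by apply: Rmult_le_pos; [apply: Rmult_le_pos |]; lra.
  nra.
- have pos : 0 <= lam0 * eps0 * c_noise ^ 2.
  { by apply: Rmult_le_pos; [apply: Rmult_le_pos | apply: pow2_ge_0]; lra. }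
  have inv_ge1 : 1 <= / (1 - beta) by rewrite -Rinv_1; apply: Rinv_le_contravar; lra.
  have -> : lnN2 / lam0 = 2 * (lam0 * eps0 * c_noise ^ 2) by rewrite L2_eq; field; lra.
  have -> : Bc = 4 * (lam0 * eps0 * c_noise ^ 2) * / (1 - beta) by rewrite /Rdiv; ring.
  by have := Rmult_le_compat_l _ _ _ pos inv_ge1; rewrite /=; lra.
- rewrite L2_eq /=; right; field; lra.
Qed.

Lemma constant_envelope_sq_le k :
  (rho ^ k * E0 + Bc) ^ 2
  <= 3 / 2 * E0 ^ 2 * (1 - (1 - beta) * eps0 / 2) ^ k
     + (1 + 2 * supnorm Qstar ^ 2) * (256 * exp 1 * lnN * eps0 / (1 - beta) ^ 2).
Proof.
have rho01 : 0 <= rho <= 1 by have := eps0_lnN_le; have := ln_card_SA_gt_half; nra.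
apply: Rle_trans (sq_add_le _ _) _; apply: Rplus_le_compat.
- have rho_k : 0 <= rho ^ k <= 1.
  { by split; [apply: pow_le | rewrite -[X in _ <= X](pow1 k); apply: pow_incr]; lra. }
  have : rho ^ k <= (1 - (1 - beta) * eps0 / 2) ^ k by apply: pow_incr; nra.
  have := pow2_ge_0 E0; have : rho ^ k * rho ^ k <= rho ^ k by nra.
  rewrite Rpow_mult_distr; nra.
- have c_sq := c_noise_sq_le; have L2_le := lnN2_le; have e_ge2 := two_le_exp1.
  have q_pos : 0 <= 1 + 2 * supnorm Qstar ^ 2 by have := pow2_ge_0 (supnorm Qstar); lra.
  have -> : 3 * Bc ^ 2 = 24 * (lnN2 * c_noise ^ 2) * (eps0 / (1 - beta) ^ 2).
  { by rewrite lnN2_eq /Rdiv; field; lra. }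
  rewrite (_ : _ * (256 * _ * _ * _ / _) = 256 * exp 1 * ((1 + 2 * supnorm Qstar ^ 2) * lnN)
                                              * (eps0 / (1 - beta) ^ 2)); last first.
  { by rewrite /Rdiv; ring. }
  apply: Rmult_le_compat_r.
  { by apply: Rmult_le_pos; [lra | apply: Rlt_le; apply: Rinv_0_lt_compat; apply: pow_lt; lra]. }
  have lnN_gt := ln_card_SA_gt_half.
  have : lnN2 * c_noise ^ 2 <= 2 * lnN * (4 * (1 + 2 * supnorm Qstar ^ 2)).
  { by apply: Rmult_le_compat; [have := lnN2_gt0; lra | apply: pow2_ge_0 | |]. }
  have : 0 <= (1 + 2 * supnorm Qstar ^ 2) * lnN by apply: Rmult_le_pos; lra.
  nra.
Qed.

Lemma Ev_sq_err_le_constant_step k :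
  Ev P rew beta (fun _ => eps0) 0 k (fun Q => supnorm (Qsub Q Qstar) ^ 2) Q0
  <= 3 / 2 * E0 ^ 2 * (1 - (1 - beta) * eps0 / 2) ^ k
     + (1 + 2 * supnorm Qstar ^ 2) * (256 * exp 1 * lnN * eps0 / (1 - beta) ^ 2).
Proof. exact: Rle_trans (Ev_sq_err_le_constant_envelope k) (constant_envelope_sq_le k). Qed.
End ConstantStep.

Lemma sqrt_succ_mul_le s t : 1 <= s -> 0 < t -> t ^ 2 = s ^ 2 + 1 -> t * (s ^ 2 - 1) <= s ^ 3.
Proof.
move=> s_ge1 t_gt0 t_sq.
have : (t * (s ^ 2 - 1)) ^ 2 <= (s ^ 3) ^ 2.
{ by rewrite Rpow_mult_distr t_sq; nra. }
have : 0 <= t * (s ^ 2 - 1) by apply: Rmult_le_pos; nra.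
have : 0 <= s ^ 3 by apply: pow_le; lra.
nra.
Qed.

(* With [s = sqrt (k + K)] and [t = sqrt (k + 1 + K)], this is the step of the envelope
   [C / sqrt (k + K)] of the diminishing step size. *)
Lemma inv_sqrt_envelope_step s t C a : 1 <= s -> 0 < t -> t ^ 2 = s ^ 2 + 1 ->
  0 <= a -> 2 * a <= C ->
  (1 - 4 / s ^ 2) * (C / s) + 2 * a * t / s ^ 4 + a / (s ^ 2 * t) <= C / t.
Proof.
move=> s_ge1 t_gt0 t_sq a_ge0 aC.
have ts := sqrt_succ_mul_le s_ge1 t_gt0 t_sq.
have s_le_t : s <= t by nra.
apply: (Rmult_le_reg_r (s ^ 4 * t)); first by apply: Rmult_lt_0_compat; [apply: pow_lt |]; lra.
have -> : ((1 - 4 / s ^ 2) * (C / s) + 2 * a * t / s ^ 4 + a / (s ^ 2 * t)) * (s ^ 4 * t)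
   = (s ^ 2 - 4) * C * s * t + a * (2 * t ^ 2 + s ^ 2) by field; lra.
have -> : C / t * (s ^ 4 * t) = C * s ^ 4 by field; lra.
rewrite t_sq.
have : C * ((s ^ 2 - 1) * s * t) <= C * s ^ 4.
{ apply: Rmult_le_compat_l; first lra.
  by have := Rmult_le_compat_l _ _ _ (Rlt_le _ _ (Rlt_le_trans _ _ _ Rlt_0_1 s_ge1)) ts; nra. }
have : 2 * a * (s * s) <= C * (s * t) by apply: Rmult_le_compat; nra.
have : a * 1 <= a * (s * s) by apply: Rmult_le_compat_l => //; nra.
have : 0 <= C * (s * t) by apply: Rmult_le_pos; nra.
lra.
Qed.

Section DiminishingStep.
Variable Q0 : S -> A -> R.

Local Notation ep := (4 / (1 - beta)).
Local Notation K := (640 * exp 1 * lnN / (1 - beta) ^ 3).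
Local Notation E0 := (supnorm (Qsub Q0 Qstar)).

Let s j := sqrt (INR j + K).
Let r := sqrt (ep * lnN2).
Let alpha := c_noise * r.
(* [lam_j := mu * s j] balances [lnN2 / lam_j] and [2 lam_j eps_j c_noise ^ 2]
   for the step size [eps_j = ep / s j ^ 2]. *)
Let mu := r / (ep * c_noise).
Let C0 := alpha * (1 + 2 * ep) + sqrt K * E0.

Lemma ep_lnN2_le : ep * lnN2 <= K / 160.
Proof.
have lnN_gt := ln_card_SA_gt_half; have L2_le := lnN2_le; have e_ge2 := two_le_exp1.
have -> : ep * lnN2 = 4 * lnN2 * (1 - beta) ^ 2 * / (1 - beta) ^ 3 by field; lra.
have -> : K / 160 = 4 * exp 1 * lnN * / (1 - beta) ^ 3 by field; lra.
apply: Rmult_le_compat_r; first by apply: Rlt_le; apply: Rinv_0_lt_compat; apply: pow_lt; lra.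
have u2_le : (1 - beta) ^ 2 <= 1 by nra.
have := Rmult_le_compat_l _ _ _ (Rlt_le _ _ lnN2_gt0) u2_le.
have : 2 * lnN <= exp 1 * lnN by apply: Rmult_le_compat_r; lra.
lra.
Qed.

Lemma lnN2_gt1 : 1 < lnN2.
Proof.
have := ln_card_SA_gt_half; have := ln_lt_2; have N_ge2 := INR_card_SA_ge2.
by rewrite /lnN2 ln_mult; lra.
Qed.

Lemma ep_ge4 : 4 <= ep.
Proof. by apply: (Rmult_le_reg_r (1 - beta)); [| field_simplify]; lra. Qed.

Lemma ep_le_K : ep <= K.
Proof. by have := ep_lnN2_le; have := lnN2_gt1; have := ep_ge4; nra. Qed.

Lemma s_sq j : s j ^ 2 = INR j + K.
Proof.
rewrite /s -Rsqr_pow2 Rsqr_sqrt //.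
by have := pos_INR j; have := ep_le_K; have := ep_ge4; lra.
Qed.

Lemma s_gt0 j : 0 < s j.
Proof. by apply: sqrt_lt_R0; have := pos_INR j; have := ep_le_K; have := ep_ge4; lra. Qed.

Lemma K_le_s_sq j : K <= s j ^ 2.
Proof. by rewrite s_sq; have := pos_INR j; lra. Qed.

Lemma s_ge1 j : 1 <= s j.
Proof. by have := K_le_s_sq j; have := ep_le_K; have := ep_ge4; have := s_gt0 j; nra. Qed.

Lemma s_succ_sq j : s j.+1 ^ 2 = s j ^ 2 + 1.
Proof. by rewrite !s_sq S_INR; ring. Qed.

Lemma r_sq : r ^ 2 = ep * lnN2.
Proof.
rewrite /r -Rsqr_pow2 Rsqr_sqrt //.
by apply: Rmult_le_pos; [have := ep_ge4 | have := lnN2_gt0]; lra.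
Qed.

Lemma r_gt0 : 0 < r.
Proof.
by apply: sqrt_lt_R0; apply: Rmult_lt_0_compat; [have := ep_ge4 | have := lnN2_gt0]; lra.
Qed.

Lemma mu_gt0 : 0 < mu.
Proof.
by apply: Rdiv_lt_0_compat; [exact: r_gt0 | have := ep_ge4; have := c_noise_ge1; nra].
Qed.

Lemma mu_ep_c : mu * ep * c_noise = r.
Proof.
have ep4 := ep_ge4; have c_ge1 := c_noise_ge1.
by rewrite /mu; field; split; lra.
Qed.

Lemma lnN2_div_mu : lnN2 / mu = alpha.
Proof.
have r_pos := r_gt0; have ep4 := ep_ge4; have c_ge1 := c_noise_ge1.
have -> : lnN2 = r ^ 2 / ep by rewrite r_sq; field; lra.
by rewrite /alpha /mu; field; repeat split; lra.
Qed.

Lemma s_succ_contract j : s j.+1 * (1 - 4 / s j ^ 2) <= s j.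
Proof.
have s_pos := s_gt0 j; have t_pos := s_gt0 j.+1; have s1 := s_ge1 j.
have := sqrt_succ_mul_le s1 t_pos (s_succ_sq j).
have : 0 < s j ^ 2 by apply: pow_lt.
move=> s2_pos ts; apply: (Rmult_le_reg_r (s j ^ 2)) => //.
have -> : s j.+1 * (1 - 4 / s j ^ 2) * s j ^ 2 = s j.+1 * (s j ^ 2 - 4) by field; lra.
by rewrite (_ : s j * s j ^ 2 = s j ^ 3); [nra | ring].
Qed.

Lemma r_s_succ_le j : r * s j.+1 / s j ^ 2 <= / 2.
Proof.
have s_pos := s_gt0 j; have t_pos := s_gt0 j.+1; have r_pos := r_gt0.
have sK := K_le_s_sq j; have epL := ep_lnN2_le; have t_sq := s_succ_sq j.
have ge0 : 0 <= r * s j.+1 / s j ^ 2.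
{ by apply: Rmult_le_pos; [nra | apply: Rlt_le; apply: Rinv_0_lt_compat; apply: pow_lt]. }
have : (r * s j.+1 / s j ^ 2) ^ 2 <= / 80.
{ rewrite (_ : _ ^ 2 = r ^ 2 * s j.+1 ^ 2 / (s j ^ 2) ^ 2); last by field; lra.
  rewrite r_sq t_sq; apply: (Rmult_le_reg_r ((s j ^ 2) ^ 2)); first by do 2!apply: pow_lt.
  rewrite (_ : _ / _ * _ = ep * lnN2 * (s j ^ 2 + 1)); last by field; lra.
  have : ep * lnN2 <= s j ^ 2 / 160 by lra.
  have : 0 <= ep * lnN2 by have := lnN2_gt0; have := ep_ge4; nra.
  have : 1 <= s j ^ 2 by have := s_ge1 j; nra.
  nra. }
nra.
Qed.

Lemma s0_eq : s 0 = sqrt K.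
Proof. by rewrite /s /= Rplus_0_l. Qed.

Lemma envelope_init : lnN2 / (mu * s 0) + E0 <= C0 / s 0.
Proof.
have s_pos := s_gt0 0; have mu_pos := mu_gt0; have r_pos := r_gt0; have ep4 := ep_ge4.
have c_ge1 := c_noise_ge1; have := supnorm_ge0 (Qsub Q0 Qstar) => E0_ge0.
have -> : lnN2 / (mu * s 0) = alpha / s 0 by rewrite -lnN2_div_mu; field; lra.
have -> : C0 / s 0 = alpha * (1 + 2 * ep) / s 0 + E0 by rewrite /C0 -s0_eq; field; lra.
apply: Rplus_le_compat_r; apply: Rmult_le_compat_r; first exact: Rlt_le (Rinv_0_lt_compat _ s_pos).
have alpha_ge0 : 0 <= alpha by rewrite /alpha; apply: Rmult_le_pos; lra.
by have := Rmult_le_pos _ _ alpha_ge0 (_ : 0 <= 2 * ep); lra.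
Qed.

Lemma envelope_step j :
  (1 - ep / s j ^ 2 * (1 - beta)) * (C0 / s j)
  + 2 * (mu * s j.+1) * (ep / s j ^ 2) ^ 2 * c_noise ^ 2
  + ep / s j ^ 2 * lnN2 / (mu * s j.+1) <= C0 / s j.+1.
Proof.
have s_pos := s_gt0 j; have t_pos := s_gt0 j.+1; have mu_pos := mu_gt0.
have ep4 := ep_ge4; have c_ge1 := c_noise_ge1; have r_pos := r_gt0.
have E0_ge0 := supnorm_ge0 (Qsub Q0 Qstar).
have -> : 1 - ep / s j ^ 2 * (1 - beta) = 1 - 4 / s j ^ 2 by field; lra.
have -> : 2 * (mu * s j.+1) * (ep / s j ^ 2) ^ 2 * c_noise ^ 2
          = 2 * (alpha * ep) * s j.+1 / s j ^ 4.
{ by rewrite /alpha -mu_ep_c; field; lra. }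
have -> : ep / s j ^ 2 * lnN2 / (mu * s j.+1) = alpha * ep / (s j ^ 2 * s j.+1).
{ by rewrite -lnN2_div_mu; field; repeat split; lra. }
apply: inv_sqrt_envelope_step; [exact: s_ge1 | exact: t_pos | exact: s_succ_sq | |].
- by rewrite /alpha; apply: Rmult_le_pos; [apply: Rmult_le_pos |]; lra.
- have : 0 <= sqrt K * E0 by apply: Rmult_le_pos; [apply: sqrt_pos |].
  by rewrite /C0 /alpha; nra.
Qed.

Lemma Ev_sq_err_le_diminishing_envelope k :
  Ev P rew beta (fun j => ep / (INR j + K)) 0 k (fun Q => supnorm (Qsub Q Qstar) ^ 2) Q0
  <= (C0 / s k) ^ 2.
Proof.
have mu_pos := mu_gt0; have ep4 := ep_ge4.
apply: (Ev_sq_err_le (lam := fun j => mu * s j) (v := fun j => C0 / s j))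
  => [j|j|j|j|j||j]; try rewrite -s_sq.
- have := K_le_s_sq j; have := ep_le_K; have := s_gt0 j => s_pos ? ?.
  split; first by apply: Rdiv_lt_0_compat; lra.
  by apply: (Rmult_le_reg_r (s j ^ 2)); [| rewrite /Rdiv Rmult_assoc Rinv_l]; lra.
- exact: Rmult_lt_0_compat mu_pos (s_gt0 j).
- by apply: Rmult_le_compat_l; [lra | rewrite /s S_INR; apply: sqrt_le_1_alt; lra].
- have s_pos := s_gt0 j.
  have -> : ep / s j ^ 2 * (1 - beta) = 4 / s j ^ 2 by field; lra.
  rewrite Rmult_assoc; apply: Rmult_le_compat_l; [lra | exact: s_succ_contract].
- rewrite (_ : _ * _ * _ * _ = r * s j.+1 / s j ^ 2); first exact: r_s_succ_le.
  by have s_pos := s_gt0 j; rewrite -mu_ep_c; field; lra.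
- exact: envelope_init.
- exact: envelope_step.
Qed.

Lemma C0_sq_le :
  C0 ^ 2 <= 8192 * exp 1 ^ 2 * (1 + 2 * supnorm Qstar ^ 2 + E0 ^ 2) * (lnN / (1 - beta) ^ 3).
Proof.
have ep4 := ep_ge4; have e_ge2 := two_le_exp1; have lnN_gt := ln_card_SA_gt_half.
have L2_le := lnN2_le; have c_sq := c_noise_sq_le; have L2_gt := lnN2_gt0.
have q_ge0 := pow2_ge_0 (supnorm Qstar); have E0_ge0 := pow2_ge_0 E0.
have u3_gt0 : 0 < (1 - beta) ^ 3 by apply: pow_lt; lra.
set Z := lnN / (1 - beta) ^ 3.
have Z_gt0 : 0 < Z by apply: Rdiv_lt_0_compat; lra.
have sum_sq : C0 ^ 2 <= 2 * (alpha * (1 + 2 * ep)) ^ 2 + 2 * (sqrt K * E0) ^ 2.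
{ by rewrite /C0; have := pow2_ge_0 (alpha * (1 + 2 * ep) - sqrt K * E0); nra. }
have init_part : (sqrt K * E0) ^ 2 = 640 * exp 1 * E0 ^ 2 * Z.
{ rewrite Rpow_mult_distr -Rsqr_pow2 Rsqr_sqrt /Z; first by field; lra.
  by apply: Rlt_le; apply: Rdiv_lt_0_compat; nra. }
have noise_part : (alpha * (1 + 2 * ep)) ^ 2 <= 2592 * (1 + 2 * supnorm Qstar ^ 2) * Z.
{ have -> : (alpha * (1 + 2 * ep)) ^ 2 = c_noise ^ 2 * lnN2 * (ep * (1 + 2 * ep) ^ 2).
  { by rewrite /alpha Rpow_mult_distr Rpow_mult_distr r_sq; ring. }
  have ep3 : ep * (1 + 2 * ep) ^ 2 <= 81 / 16 * ep ^ 3 by nra.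
  have -> : 2592 * (1 + 2 * supnorm Qstar ^ 2) * Z
            = (4 * (1 + 2 * supnorm Qstar ^ 2)) * (2 * lnN) * (81 / 16 * ep ^ 3).
  { by rewrite /Z; field; lra. }
  by apply: Rmult_le_compat; nra. }
have : (5184 * (1 + 2 * supnorm Qstar ^ 2) + 1280 * exp 1 * E0 ^ 2) * Z
       <= 8192 * exp 1 ^ 2 * (1 + 2 * supnorm Qstar ^ 2 + E0 ^ 2) * Z.
{ apply: Rmult_le_compat_r; first lra.
  have e_sq : 4 <= exp 1 ^ 2 by nra.
  have := Rmult_le_compat_r _ _ _ (_ : 0 <= 1 + 2 * supnorm Qstar ^ 2) e_sq.
  have : 1280 * exp 1 <= 8192 * exp 1 ^ 2 by nra.
  move/(Rmult_le_compat_r _ _ _ E0_ge0); lra. }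
lra.
Qed.

Lemma Ev_sq_err_le_diminishing_step k :
  Ev P rew beta (fun j => ep / (INR j + K)) 0 k (fun Q => supnorm (Qsub Q Qstar) ^ 2) Q0
  <= 8192 * exp 1 ^ 2 * (1 + 2 * supnorm Qstar ^ 2 + E0 ^ 2)
     * (lnN / (1 - beta) ^ 3) * (1 / (INR k + K)).
Proof.
apply: Rle_trans (Ev_sq_err_le_diminishing_envelope k) _.
have s_pos := s_gt0 k.
rewrite (_ : (C0 / s k) ^ 2 = C0 ^ 2 * (1 / s k ^ 2)); last by field; lra.
rewrite s_sq; apply: Rmult_le_compat_r; last exact: C0_sq_le.
by rewrite -s_sq; apply: Rlt_le; apply: Rdiv_lt_0_compat; [lra | apply: pow_lt].
Qed.
End DiminishingStep.
End QLearning.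

Theorem theorem5 (St Ac : finType) (P : Ac -> St -> St -> R) (rew : St -> Ac -> R)
  (beta : R) (Q0 Qstar : St -> Ac -> R)
  (hP_nonneg : forall a s s', 0 <= P a s s')
  (hP_sum : forall a s, \big[Rplus/0]_(s' : St) P a s s' = 1)
  (hrew : forall s a, 0 <= rew s a <= 1)
  (hbeta : 0 < beta < 1)
  (hcard : (2 <= #|St| * #|Ac|)%nat)
  (hfix : forall s a, bellman P rew beta Qstar s a = Qstar s a) :
  (* (a) constant step size *)
  (forall eps : R, 0 < eps ->
     eps <= (1 - beta) ^ 2 / (640 * exp 1 * ln (INR (#|St| * #|Ac|)%nat)) ->
     forall k : nat,
       Ev P rew beta (fun _ => eps) 0 k
          (fun Q => (supnorm (Qsub Q Qstar)) ^ 2) Q0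
       <= 3 / 2 * (supnorm (Qsub Q0 Qstar)) ^ 2 * (1 - (1 - beta) * eps / 2) ^ k
          + (1 + 2 * (supnorm Qstar) ^ 2)
            * (256 * exp 1 * ln (INR (#|St| * #|Ac|)%nat) * eps / (1 - beta) ^ 2))
  /\
  (* (b) diminishing step size eps_k = eps / (k + K) *)
  (let eps := 4 / (1 - beta) in
   let K := 640 * exp 1 * ln (INR (#|St| * #|Ac|)%nat) / (1 - beta) ^ 3 in
   forall k : nat,
     Ev P rew beta (fun j => eps / (INR j + K)) 0 k
        (fun Q => (supnorm (Qsub Q Qstar)) ^ 2) Q0
     <= 8192 * (exp 1) ^ 2
        * (1 + 2 * (supnorm Qstar) ^ 2 + (supnorm (Qsub Q0 Qstar)) ^ 2)
        * (ln (INR (#|St| * #|Ac|)%nat) / (1 - beta) ^ 3) * (1 / (INR k + K))).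
Proof.
have /card_gt0P [a0 _] : (0 < #|Ac|)%nat by move: hcard; case: #|Ac| => //; rewrite muln0.
split.
- move=> eps eps_gt0 eps_le k.
  exact (Ev_sq_err_le_constant_step a0 hP_nonneg hP_sum hbeta hfix hcard Q0 eps_gt0 eps_le k).
- exact (Ev_sq_err_le_diminishing_step a0 hP_nonneg hP_sum hbeta hfix hcard Q0).
Qed.
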